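(* Let $n \ge 1$ and $0 \le k \le n$ be integers, and let $A_0, A_1$ be real symmetric $n\times n$ matrices with $A_1$ positive definite. Consider the sparse QCQP $$\mathcal{Q}:\quad \max\ x^{\intercal}A_0x \quad\text{s.t.}\quad x^{\intercal}A_1x = 1,\ x\in\mathbb{R}^n,\ |\mathrm{supp}(x)|\le k.$$ Let $p$ be an LPM polynomial of degree $k$ with nonnegative coefficients, and let $g(t) = p(A_1 t - A_0)$. Then there exists a feasible point $x$ of $\mathcal{Q}$ whose objective value $x^{\intercal}A_0x$ is at least $\eta_g$. In particular, $\eta_g$ is a lower bound for the optimal value of $\mathcal{Q}$.
   Context: $\mathrm{supp}(x) = \{i\in[n] : x_i\neq 0\}$. For a symmetric matrix $X$ and $S\subseteq[n]$, $X|_S$ denotes the principal submatrix of $X$ indexed by $S$. An LPM (linear combination of principal minors) polynomial of degree $k$ is a polynomial in the entries of a symmetric $n\times n$ matrix $X$ that is not identically zero and has the form $p(X)=\sum_{S\subseteq[n],|S|=k} a_S\det(X|_S)$ for real coefficients $a_S$. For a univariate polynomial $g$, $\eta_g$ denotes the largest real root of $g$, or $-\infty$ if $g$ has no real roots. *)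

From HB Require Import structures.
From mathcomp Require Import all_boot all_order all_algebra.
From mathcomp Require Import classical_sets boolp reals constructive_ereal ereal.
Set Implicit Arguments. Unset Strict Implicit. Unset Printing Implicit Defensive.
Import Order.TTheory GRing.Theory Num.Theory.
Local Open Scope ring_scope.
Local Open Scope classical_set_scope.

Definition principal_sub (T : Type) (n : nat) (X : 'M[T]_n) (S : {set 'I_n})
  : 'M[T]_#|S| := mxsub (@enum_val _ (mem S)) (@enum_val _ (mem S)) X.

Definition lpm (R : comNzRingType) (n k : nat) (a : {set 'I_n} -> R)
  (X : 'M[R]_n) : R :=
  \sum_(S : {set 'I_n} | #|S| == k) a S * \det (principal_sub X S).

Definition is_LPM (R : realType) (n k : nat) (a : {set 'I_n} -> R) : Prop :=
  exists X : 'M[R]_n, X^T = X /\ lpm k a X != 0.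

Definition lpm_pencil (R : realType) (n k : nat) (a : {set 'I_n} -> R)
  (A0 A1 : 'M[R]_n) : {poly R} :=
  lpm k (fun S => (a S)%:P) ('X *: map_mx polyC A1 - map_mx polyC A0).

(* eta_g: largest real root of g, or -oo if g has no real roots. *)
Definition eta_poly (R : realType) (g : {poly R}) : \bar R :=
  ereal_sup [set (t%:E)%E | t in [set t : R | root g t]].

Definition qform (R : realType) (n : nat) (A : 'M[R]_n) (x : 'cV[R]_n) : R :=
  (x^T *m A *m x) 0 0.

Definition supp (R : realType) (n : nat) (x : 'cV[R]_n) : {set 'I_n} :=
  [set i | x i 0 != 0].

Definition posdef (R : realType) (n : nat) (A : 'M[R]_n) : Prop :=
  A^T = A /\ forall x : 'cV[R]_n, x != 0 -> 0 < qform A x.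

(* Let r be the largest real root of g(t) = p(t A1 - A0); g is nonzero since
   its coefficient of t^k is p(A1) > 0.  If every feasible x had objective
   value below r, every k x k principal submatrix of r A1 - A0 would be
   positive definite, hence of positive determinant, and g(r) would be a
   nonnegative combination of positive minors with a positive coefficient,
   contradicting g(r) = 0. *)
From HB Require Import structures.
From mathcomp Require Import all_boot all_order all_algebra.
From mathcomp Require Import classical_sets boolp reals constructive_ereal ereal.
From mathcomp Require Import polyrcf lra.
Import Order.TTheory GRing.Theory Num.Theory.
Local Open Scope ring_scope.
Set Implicit Arguments. Unset Strict Implicit.

Section QuadraticForms.
Variables (R : realType) (m : nat).
Implicit Types (A B M : 'M[R]_m) (y : 'cV[R]_m).

Lemma qformD A B y : qform (A + B) y = qform A y + qform B y.
Proof. by rewrite /qform mulmxDr mulmxDl mxE. Qed.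

Lemma qformZl (c : R) A y : qform (c *: A) y = c * qform A y.
Proof. by rewrite /qform -scalemxAr -scalemxAl mxE. Qed.

Lemma qformN A y : qform (- A) y = - qform A y.
Proof. by rewrite -scaleN1r qformZl mulN1r. Qed.

Lemma qformZr (c : R) A y : qform A (c *: y) = c ^+ 2 * qform A y.
Proof.
rewrite /qform; have -> : (c *: y)^T = c *: y^T by apply/matrixP => i j; rewrite !mxE.
by rewrite -!scalemxAl -scalemxAr !mxE mulrA expr2.
Qed.

Definition positive_qform M := forall y, y != 0 -> 0 < qform M y.

Lemma positive_qform1 : positive_qform 1%:M.
Proof.
move=> y /cV0Pn [i yi]; rewrite /qform mulmx1 mxE (bigD1 i) //= mxE.
rewrite ltr_pwDl ?sumr_ge0 //; first by rewrite -expr2 exprn_even_gt0 ?yi ?orbT.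
by move=> j _; rewrite mxE -expr2 sqr_ge0.
Qed.

Lemma positive_qform_det_neq0 M : positive_qform M -> \det M != 0.
Proof.
move=> posM; apply/negP => /det0P [v v_neq0 vM].
by have := posM v^T; rewrite trmx_eq0 /qform trmxK vM mul0mx mxE ltxx => /(_ v_neq0).
Qed.

(* The segment s M + (1 - s) I consists of positive forms, so its determinant,
   a polynomial in s equal to 1 at s = 0, never vanishes on [0, 1]. *)
Lemma positive_qform_det_gt0 M : positive_qform M -> 0 < \det M.
Proof.
move=> posM.
pose P : 'M[{poly R}]_m := 'X *: map_mx polyC M + (1 - 'X) *: 1%:M.
have hornerP s : (\det P).[s] = \det (s *: M + (1 - s) *: 1%:M).
  rewrite -[_.[s]]/(horner_eval s _) -det_map_mx; congr (\det _).
  by apply/matrixP => i j; rewrite !mxE /= /horner_eval; case: (i == j); rewrite !hornerE.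
have pos_segment s : 0 <= s <= 1 -> positive_qform (s *: M + (1 - s) *: 1%:M).
  move=> /andP [s0 s1] y y_neq0; rewrite qformD !qformZl.
  have := posM y y_neq0; have := positive_qform1 y_neq0; nra.
rewrite ltNge; apply/negP => detM_le0.
have [s /andP [s0 s1]] : exists2 s, 0 <= s <= 1 & root (- \det P) s.
  apply: poly_ivt => //; rewrite !hornerN !hornerP.
  rewrite scale0r add0r subr0 scale1r det1 scale1r subrr scale0r addr0.
  by rewrite oppr_le0 ler01 oppr_ge0.
rewrite rootN /root hornerP; apply/negP/positive_qform_det_neq0/pos_segment.
by rewrite s0 s1.
Qed.

Lemma qform_normalize A B y : 0 < qform B y ->
  exists2 x, qform B x = 1 /\ supp x = supp y & qform A x = qform A y / qform B y.
Proof.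
set c := qform B y => c_gt0.
have sqrtc_gt0 : 0 < Num.sqrt c by rewrite sqrtr_gt0.
have sqrtcV2 : (Num.sqrt c)^-1 ^+ 2 = c^-1 by rewrite exprVn sqr_sqrtr // ltW.
exists ((Num.sqrt c)^-1 *: y); last by rewrite qformZr sqrtcV2 mulrC.
split; first by rewrite qformZr sqrtcV2 mulVf // gt_eqF.
by apply/setP => i; rewrite !inE mxE mulf_eq0 negb_or invr_eq0 gt_eqF.
Qed.

End QuadraticForms.

Section PrincipalSubmatrices.
Variables (R : realType) (n : nat) (S : {set 'I_n}).

Definition selmx : 'M[R]_(n, #|S|) := \matrix_(i, j) (i == enum_val j)%:R.

Lemma tr_selmx_mulE p (M : 'M[R]_(n, p)) i l : (selmx^T *m M) i l = M (enum_val i) l.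
Proof.
rewrite mxE (bigD1 (enum_val i)) //= big1 => [|j /negbTE j_neq]; rewrite !mxE.
  by rewrite eqxx mul1r addr0.
by rewrite j_neq mul0r.
Qed.

Lemma mulmx_selmxE p (M : 'M[R]_(p, n)) l j : (M *m selmx) l j = M l (enum_val j).
Proof.
rewrite mxE (bigD1 (enum_val j)) //= big1 => [|i /negbTE i_neq]; rewrite !mxE.
  by rewrite eqxx mulr1 addr0.
by rewrite i_neq mulr0.
Qed.

Lemma principal_subE (M : 'M[R]_n) :
  principal_sub M S = selmx^T *m M *m selmx.
Proof. by apply/matrixP => i j; rewrite mulmx_selmxE tr_selmx_mulE !mxE. Qed.

Lemma qform_selmx (M : 'M[R]_n) y : qform M (selmx *m y) = qform (principal_sub M S) y.
Proof. by rewrite /qform principal_subE trmx_mul !mulmxA. Qed.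

Lemma selmx_mulE (y : 'cV[R]_#|S|) j : (selmx *m y) (enum_val j) 0 = y j 0.
Proof.
rewrite mxE (bigD1 j) //= big1 => [|l l_neq_j]; first by rewrite !mxE eqxx mul1r addr0.
by rewrite !mxE (inj_eq enum_val_inj) eq_sym (negbTE l_neq_j) mul0r.
Qed.

Lemma selmx_mul_eq0 (y : 'cV[R]_#|S|) : (selmx *m y == 0) = (y == 0).
Proof.
apply/idP/idP => [|/eqP ->]; last by rewrite mulmx0.
apply: contraLR => /cV0Pn [j yj]; apply/cV0Pn; exists (enum_val j).
by rewrite selmx_mulE.
Qed.

Lemma supp_selmx (y : 'cV[R]_#|S|) : supp (selmx *m y) \subset S.
Proof.
apply/fintype.subsetP => i; rewrite inE; apply: contraNT => i_notin_S.
rewrite mxE big1 // => j _; rewrite !mxE.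
by case: eqP => [i_eq|]; [move: i_notin_S; rewrite i_eq enum_valP | rewrite mul0r].
Qed.

Lemma positive_qform_principal_sub (M : 'M[R]_n) :
  positive_qform M -> positive_qform (principal_sub M S).
Proof.
by move=> posM y y_neq0; rewrite -qform_selmx posM // selmx_mul_eq0.
Qed.

End PrincipalSubmatrices.

Section LPM.
Variables (R : realType) (n k : nat) (a : {set 'I_n} -> R).
Hypothesis a_ge0 : forall S, 0 <= a S.

Definition has_pos_coef := exists2 S : {set 'I_n}, #|S| == k & 0 < a S.

Lemma is_LPM_has_pos_coef : is_LPM k a -> has_pos_coef.
Proof.
move=> [X [_ /eqP lpmX_neq0]]; apply: contrapT => no_pos_coef.
apply: lpmX_neq0; rewrite /lpm big1 // => S cardS.
suff -> : a S = 0 by rewrite mul0r.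
by apply/eqP; rewrite eq_le a_ge0 andbT leNgt; apply/negP => aS; apply: no_pos_coef; exists S.
Qed.

Lemma lpm_gt0 (X : 'M[R]_n) : has_pos_coef ->
  (forall S : {set 'I_n}, #|S| == k -> 0 < \det (principal_sub X S)) -> 0 < lpm k a X.
Proof.
move=> [S0 cardS0 aS0] minors_gt0; rewrite /lpm (bigD1 S0) //=.
rewrite ltr_pwDl ?mulr_gt0 ?minors_gt0 // sumr_ge0 // => S /andP [cardS _].
by rewrite mulr_ge0 // ltW // minors_gt0.
Qed.

Variables (A0 A1 : 'M[R]_n).

Lemma horner_lpm_pencil t : (lpm_pencil k a A0 A1).[t] = lpm k a (t *: A1 - A0).
Proof.
rewrite /lpm_pencil /lpm horner_sum; apply: eq_bigr => S _.
rewrite hornerM hornerC -[_.[t]]/(horner_eval t _) -det_map_mx; congr (_ * \det _).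
by apply/matrixP => i j; rewrite !mxE /= /horner_eval !hornerE.
Qed.

Lemma det_pencil_principal_sub S : \det (principal_sub A1 S) != 0 ->
  \det (principal_sub ('X *: map_mx polyC A1 - map_mx polyC A0) S) =
  (\det (principal_sub A1 S))%:P *
    char_poly (invmx (principal_sub A1 S) *m principal_sub A0 S).
Proof.
move=> det_neq0; have A1S_unit : principal_sub A1 S \in unitmx by rewrite unitmxE unitfE.
rewrite -det_map_mx /= /char_poly /char_poly_mx -det_mulmx mulmxBr mul_mx_scalar.
rewrite -map_mxM mulKVmx //; congr (\det _).
by apply/matrixP => i j; rewrite !mxE.
Qed.

Lemma coef_lpm_pencil : (forall S, \det (principal_sub A1 S) != 0) ->
  (lpm_pencil k a A0 A1)`_k = lpm k a A1.
Proof.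
move=> minors_neq0; rewrite /lpm_pencil /lpm coef_sum; apply: eq_bigr => S /eqP cardS.
rewrite coefCM det_pencil_principal_sub // coefCM.
have /monicP := char_poly_monic (invmx (principal_sub A1 S) *m principal_sub A0 S).
by rewrite /lead_coef size_char_poly /= -cardS => ->; rewrite mulr1.
Qed.

Definition qcqp_feasible (x : 'cV[R]_n) := qform A1 x = 1 /\ (#|supp x| <= k)%N.

Hypothesis posA1 : positive_qform A1.

(* If the objective stays below t on the feasible set, then every principal
   submatrix of t A1 - A0 of size k is positive definite. *)
Lemma lpm_pencil_gt0 t : has_pos_coef ->
  (forall x, qcqp_feasible x -> qform A0 x < t) -> 0 < (lpm_pencil k a A0 A1).[t].
Proof.
move=> coef_pos obj_lt; rewrite horner_lpm_pencil; apply: lpm_gt0 => // S /eqP cardS.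
apply: positive_qform_det_gt0 => y y_neq0.
rewrite -qform_selmx qformD qformZl qformN.
have q1_gt0 : 0 < qform A1 (selmx R S *m y) by rewrite posA1 // selmx_mul_eq0.
have [x [x1 suppx] q0x] := qform_normalize A0 q1_gt0.
have /obj_lt : qcqp_feasible x.
  by split=> //; rewrite suppx -cardS subset_leq_card // supp_selmx.
rewrite q0x ltr_pdivrMr //; lra.
Qed.

Lemma root_lpm_pencil t : has_pos_coef -> root (lpm_pencil k a A0 A1) t ->
  exists2 x, qcqp_feasible x & t <= qform A0 x.
Proof.
move=> coef_pos /eqP g_t; apply: contrapT => no_x.
suff : 0 < (lpm_pencil k a A0 A1).[t] by rewrite g_t ltxx.
apply: lpm_pencil_gt0 => // x feas_x; rewrite ltNge; apply/negP => t_le.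
by apply: no_x; exists x.
Qed.

End LPM.

Lemma qcqp_feasible_exists (R : realType) n k (A1 : 'M[R]_n) :
  (0 < n)%N -> (0 < k)%N -> positive_qform A1 -> exists x, qcqp_feasible k A1 x.
Proof.
move=> n_gt0 k_gt0 posA1; pose i0 := Ordinal n_gt0; pose e : 'cV[R]_n := delta_mx i0 0.
have e_neq0 : e != 0 by apply/cV0Pn; exists i0; rewrite mxE !eqxx oner_eq0.
have [x [x1 suppx] _] := qform_normalize A1 (posA1 e e_neq0).
exists x; split=> //; apply: leq_trans k_gt0; rewrite suppx -(cards1 i0) subset_leq_card //.
by apply/fintype.subsetP => i; rewrite !inE mxE eqxx andbT; case: (i == i0); rewrite ?eqxx.
Qed.

Lemma max_root (R : realType) (g : {poly R}) t0 : g != 0 -> root g t0 ->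
  exists2 r, root g r & forall t, root g t -> t <= r.
Proof.
move=> g_neq0 g_t0; have rootsE t : root g t = (t \in rootsR g).
  by rewrite -roots_on_rootsR.
exists (\big[Num.max/t0]_(t <- rootsR g) t) => [|t]; last first.
  by rewrite rootsE => t_in; apply: le_bigmax_seq.
rewrite big_seq; apply: (big_ind (root g)) => // [x y g_x g_y|t]; last by rewrite rootsE.
by rewrite /Num.max; case: ifP.
Qed.

Lemma eta_poly_le (R : realType) (g : {poly R}) c :
  (forall t, root g t -> t <= c) -> (eta_poly g <= c%:E)%E.
Proof. by move=> ub; apply: ge_ereal_sup => _ [t g_t <-]; rewrite lee_fin ub. Qed.

Unset Implicit Arguments. Set Strict Implicit.

Theorem mainTheorem1 (R : realType) (n k : nat) (A0 A1 : 'M[R]_n)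
  (a : {set 'I_n} -> R) :
  (1 <= n)%N -> (1 <= k <= n)%N ->
  A0^T = A0 -> posdef A1 ->
  is_LPM k a -> (forall S : {set 'I_n}, 0 <= a S) ->
  exists x : 'cV[R]_n,
    [/\ qform A1 x = 1, (#|supp x| <= k)%N &
        (eta_poly (lpm_pencil k a A0 A1) <= (qform A0 x)%:E)%E].
Proof.
move=> n_gt0 /andP [k_gt0 _] _ [_ posA1] LPM_a a_ge0.
have coef_pos := is_LPM_has_pos_coef a_ge0 LPM_a.
have minors_gt0 S : 0 < \det (principal_sub A1 S).
  exact/positive_qform_det_gt0/positive_qform_principal_sub.
have g_neq0 : lpm_pencil k a A0 A1 != 0.
  apply: contraTneq (lpm_gt0 a_ge0 coef_pos (fun S _ => minors_gt0 S)) => g0.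
  rewrite -(coef_lpm_pencil k a A0) => [|S]; last by rewrite gt_eqF.
  by rewrite g0 coef0 ltxx.
have [[t0 root_t0]|no_root] := pselect (exists t, root (lpm_pencil k a A0 A1) t).
  have [r root_r r_max] := max_root g_neq0 root_t0.
  have [x [x1 xk] r_le] := root_lpm_pencil a_ge0 posA1 coef_pos root_r.
  by exists x; split=> //; apply: eta_poly_le => t /r_max /le_trans; apply.
have [x [x1 xk]] := qcqp_feasible_exists n_gt0 k_gt0 posA1.
by exists x; split=> //; apply: eta_poly_le => t root_t; case: no_root; exists t.
Qed.
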